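(* Let $d\ge3$ and $\beta>0$. Then as $\varepsilon\to0$, \[\mathcal{B}_{\mathrm{Ising}}(\pi^*_\varepsilon,\beta,d)=\log2+\frac d2\log\frac{1+e^{-\beta}}{2}+\frac{4\varepsilon^4d\,e^{-2\beta}(e^\beta-1)^2\left(e^{2\beta}(d-2)-2de^\beta+d-2\right)}{(1+e^\beta)^2(1+e^{-\beta})^2}+O(\varepsilon^5),\] where $\pi^*_\varepsilon=\frac12(\delta_{2\varepsilon}+\delta_{-2\varepsilon})$.
   Context: For a probability measure $\pi$ on $[-1,1]$ let $(\mu_{\pi,i})_{i\ge1}$ be independent samples from $\pi$, let $\Lambda(x)=x\log x$, and \[\mathcal{B}_{\mathrm{Ising}}(\pi,\beta,d)=\mathbb{E}\left[\frac{\Lambda\left(\sum_{\sigma\in\{\pm1\}}\prod_{i=1}^d\left(1-(1-e^{-\beta})\frac{1+\sigma\mu_{\pi,i}}{2}\right)\right)}{2^{1-d}(1+e^{-\beta})^d}-\frac{d\,\Lambda\left(1-(1-e^{-\beta})\frac{1+\mu_{\pi,1}\mu_{\pi,2}}{2}\right)}{1+e^{-\beta}}\right].\] $\delta_x$ is the point mass at $x$. *)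

From Stdlib Require Import Reals List ZArith.
Import ListNotations.
Open Scope R_scope.

Definition Lambda (x : R) : R := x * ln x.

(* A finitely supported probability distribution on R, as a list of
   (weight, atom) pairs. *)
Definition fdist := list (R * R).

Definition is_prob_on_m11 (pi : fdist) : Prop :=
  Forall (fun p => 0 <= fst p /\ -1 <= snd p <= 1) pi /\
  fold_right Rplus 0 (map fst pi) = 1.

Definition fexpect (pi : fdist) (g : R -> R) : R :=
  fold_right Rplus 0 (map (fun p => fst p * g (snd p)) pi).

(* iidE pi n f = E[ f(mu) ] where mu_1, ..., mu_n are i.i.d. samples from pi
   (the values mu i for i = 0 or i > n are irrelevant and set to 0). *)
Fixpoint iidE (pi : fdist) (n : nat) (f : (nat -> R) -> R) : R :=
  match n with
  | O => f (fun _ => 0)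
  | S k => iidE pi k (fun mu =>
             fexpect pi (fun x => f (fun i => if Nat.eqb i (S k) then x else mu i)))
  end.

Fixpoint prodR (f : nat -> R) (n : nat) : R :=
  match n with
  | O => 1
  | S k => prodR f k * f (S k)
  end.

Definition B_Ising (pi : fdist) (beta : R) (d : nat) : R :=
  iidE pi d (fun mu =>
    Lambda (prodR (fun i => 1 - (1 - exp (- beta)) * ((1 + mu i) / 2)) d
          + prodR (fun i => 1 - (1 - exp (- beta)) * ((1 - mu i) / 2)) d)
      / (powerRZ 2 (1 - Z.of_nat d) * (1 + exp (- beta)) ^ d)
    - INR d * Lambda (1 - (1 - exp (- beta)) * ((1 + mu 1%nat * mu 2%nat) / 2))
      / (1 + exp (- beta))).

Definition pistar (eps : R) : fdist := [(1/2, 2 * eps); (1/2, - (2 * eps))].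

(* Write q = exp (- beta), h = (1 + q) / 2 and c = (1 - q) / (1 + q). Each factor of the
   integrand is h (1 -+ c mu_i), so with P_+- = prod_i (1 +- c mu_i), T = (P_+ + P_-)/2 - 1 and
   w = c mu_1 mu_2 the integrand is exactly
     (1 + T) (d ln h + ln 2) + Lambda (1 + T) - d/2 ((1 - w) ln h + Lambda (1 - w)).
   For atoms of size at most r we have T = O(r^2) and w = O(r^2), so replacing Lambda (1 + t)
   by t + t^2/2 costs O(r^6). The resulting quadratic expression is integrated exactly for any
   centred law with second moment s: E T = E w = 0, E w^2 = c^2 s^2 and
   E T^2 = ((1 + c^2 s)^d + (1 - c^2 s)^d)/2 - 1 = d (d - 1)/2 (c^2 s)^2 + O(s^3).
   For pi*_eps one has r = 2 |eps| and s = 4 eps^2. *)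

From Stdlib Require Import Reals Lra Lia List.
From Coquelicot Require Coquelicot.
Open Scope R_scope.

(** * Expectations under i.i.d. sampling *)

Definition mass (pi : fdist) : R := fold_right Rplus 0 (map fst pi).

Definition supported_in (Q : R -> Prop) (pi : fdist) : Prop :=
  Forall (fun p => 0 <= fst p /\ Q (snd p)) pi.

Definition sample_in (Q : R -> Prop) (n : nat) (mu : nat -> R) : Prop :=
  forall i, (1 <= i <= n)%nat -> Q (mu i).

Lemma Rabs_le_inv a b : Rabs a <= b -> - b <= a <= b.
Proof. unfold Rabs; destruct (Rcase_abs a); lra. Qed.

Section Expectation.

Variable pi : fdist.

Lemma fexpect_ext f g : (forall x, f x = g x) -> fexpect pi f = fexpect pi g.
Proof.
  intros H; unfold fexpect; induction pi as [|p l IH]; simpl; [reflexivity|].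
  now rewrite H, IH.
Qed.

Lemma fexpect_plus f g : fexpect pi (fun x => f x + g x) = fexpect pi f + fexpect pi g.
Proof. unfold fexpect; induction pi as [|p l IH]; simpl; [ring|]. rewrite IH; ring. Qed.

Lemma fexpect_scal k f : fexpect pi (fun x => k * f x) = k * fexpect pi f.
Proof. unfold fexpect; induction pi as [|p l IH]; simpl; [ring|]. rewrite IH; ring. Qed.

Lemma fexpect_const k : fexpect pi (fun _ => k) = k * mass pi.
Proof. unfold fexpect, mass; induction pi as [|p l IH]; simpl; [ring|]. rewrite IH; ring. Qed.

Lemma fexpect_le Q f g :
  supported_in Q pi -> (forall x, Q x -> f x <= g x) -> fexpect pi f <= fexpect pi g.
Proof.
  unfold supported_in, fexpect; intros Hpi H; induction Hpi as [|p l [Hp HQ] _ IH]; simpl;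
    [lra|].
  apply Rplus_le_compat; [apply Rmult_le_compat_l|]; auto.
Qed.

Lemma iidE_ext n f g : (forall mu, f mu = g mu) -> iidE pi n f = iidE pi n g.
Proof.
  revert f g; induction n as [|k IH]; intros f g H; simpl; [apply H|].
  apply IH; intros mu; apply fexpect_ext; intros; apply H.
Qed.

Lemma iidE_plus n f g : iidE pi n (fun mu => f mu + g mu) = iidE pi n f + iidE pi n g.
Proof.
  revert f g; induction n as [|k IH]; intros f g; simpl; [reflexivity|].
  rewrite <- IH; apply iidE_ext; intros mu; apply fexpect_plus.
Qed.

Lemma iidE_scal n k f : iidE pi n (fun mu => k * f mu) = k * iidE pi n f.
Proof.
  revert f; induction n as [|j IH]; intros f; simpl; [reflexivity|].
  rewrite <- IH; apply iidE_ext; intros mu; apply fexpect_scal.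
Qed.

Lemma iidE_const n k : mass pi = 1 -> iidE pi n (fun _ => k) = k.
Proof.
  intros H1; induction n as [|j IH]; simpl; [reflexivity|].
  transitivity (iidE pi j (fun _ => k)); [|exact IH].
  apply iidE_ext; intros mu; rewrite fexpect_const, H1; ring.
Qed.

Lemma iidE_le Q n f g : supported_in Q pi ->
  (forall mu, sample_in Q n mu -> f mu <= g mu) -> iidE pi n f <= iidE pi n g.
Proof.
  intros Hpi; revert f g; induction n as [|k IH]; intros f g H; simpl.
  - apply H; intros i Hi; lia.
  - apply IH; intros mu Hmu; apply (fexpect_le Q); [exact Hpi|]; intros x Qx.
    apply H; intros i Hi; destruct (Nat.eqb_spec i (S k)); [exact Qx|].
    apply Hmu; lia.
Qed.

Lemma Rabs_iidE_sub_le Q n f g b : supported_in Q pi -> mass pi = 1 ->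
  (forall mu, sample_in Q n mu -> Rabs (f mu - g mu) <= b) ->
  Rabs (iidE pi n f - iidE pi n g) <= b.
Proof.
  intros Hpi H1 H.
  assert (Hup : iidE pi n f <= iidE pi n (fun mu => g mu + b)).
  { apply (iidE_le Q); [exact Hpi|]; intros mu Hmu.
    specialize (H mu Hmu); apply Rabs_le_inv in H; lra. }
  assert (Hlow : iidE pi n (fun mu => g mu + - b) <= iidE pi n f).
  { apply (iidE_le Q); [exact Hpi|]; intros mu Hmu.
    specialize (H mu Hmu); apply Rabs_le_inv in H; lra. }
  rewrite iidE_plus, iidE_const in Hup, Hlow by exact H1.
  apply Rabs_le; lra.
Qed.

End Expectation.

Lemma prodR_ext f g n :
  (forall i, (1 <= i <= n)%nat -> f i = g i) -> prodR f n = prodR g n.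
Proof.
  induction n as [|k IH]; intros H; simpl; [reflexivity|].
  rewrite IH, H; [reflexivity | lia | intros i Hi; apply H; lia].
Qed.

Lemma prodR_mult f g n : prodR (fun i => f i * g i) n = prodR f n * prodR g n.
Proof. induction n as [|k IH]; simpl; [ring|]. rewrite IH; ring. Qed.

Lemma prodR_scal k f n : prodR (fun i => k * f i) n = k ^ n * prodR f n.
Proof. induction n as [|j IH]; simpl; [ring|]. rewrite IH; ring. Qed.

Lemma prodR_const k n : prodR (fun _ => k) n = k ^ n.
Proof. induction n as [|j IH]; simpl; [ring|]. rewrite IH; ring. Qed.

Lemma prodR_first_two f n : (2 <= n)%nat ->
  prodR (fun i => if (i <=? 2)%nat then f i else 1) n = f 1%nat * f 2%nat.
Proof.
  induction n as [|k IH]; intros Hn; [lia|].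
  destruct (Nat.eq_dec k 1) as [->|Hk]; [simpl; ring|].
  cbn [prodR]; rewrite IH by lia.
  replace (S k <=? 2)%nat with false by (symmetry; apply Nat.leb_gt; lia); ring.
Qed.

Lemma iidE_prodR pi n (h : nat -> R -> R) :
  iidE pi n (fun mu => prodR (fun i => h i (mu i)) n) = prodR (fun i => fexpect pi (h i)) n.
Proof.
  induction n as [|k IH]; simpl; [reflexivity|].
  rewrite <- IH, (Rmult_comm (iidE _ _ _)), <- iidE_scal; apply iidE_ext; intros mu.
  rewrite (Rmult_comm (fexpect _ _)), <- fexpect_scal; apply fexpect_ext; intros x.
  rewrite Nat.eqb_refl; f_equal; apply prodR_ext; intros i Hi.
  destruct (Nat.eqb_spec i (S k)); [lia|reflexivity].
Qed.

Lemma iidE_prodR_iid pi n (h : R -> R) :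
  iidE pi n (fun mu => prodR (fun i => h (mu i)) n) = fexpect pi h ^ n.
Proof. rewrite (iidE_prodR pi n (fun _ => h)); apply prodR_const. Qed.

Lemma iidE_first_two pi n (g : R -> R) : mass pi = 1 -> (2 <= n)%nat ->
  iidE pi n (fun mu => g (mu 1%nat) * g (mu 2%nat)) = fexpect pi g ^ 2.
Proof.
  intros H1 Hn; set (h i y := if (i <=? 2)%nat then g y else 1).
  etransitivity; [|etransitivity; [exact (iidE_prodR pi n h)|]].
  - apply iidE_ext; intros mu; symmetry; exact (prodR_first_two (fun i => g (mu i)) n Hn).
  - replace (fexpect pi g ^ 2) with (fexpect pi g * fexpect pi g) by ring.
    rewrite <- (prodR_first_two (fun _ => fexpect pi g) n Hn).
    apply prodR_ext; intros i _; unfold h; destruct (i <=? 2)%nat; [reflexivity|].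
    rewrite fexpect_const, H1; ring.
Qed.

(** * Symmetrised products *)

Definition even_prod (a : nat -> R) (n : nat) : R :=
  (prodR (fun i => 1 + a i) n + prodR (fun i => 1 - a i) n) / 2.

Definition odd_prod (a : nat -> R) (n : nat) : R :=
  (prodR (fun i => 1 + a i) n - prodR (fun i => 1 - a i) n) / 2.

Lemma even_prod_S a n : even_prod a (S n) = even_prod a n + a (S n) * odd_prod a n.
Proof. unfold even_prod, odd_prod; simpl; field. Qed.

Lemma odd_prod_S a n : odd_prod a (S n) = odd_prod a n + a (S n) * even_prod a n.
Proof. unfold even_prod, odd_prod; simpl; field. Qed.

Lemma Rabs_plus_mult_le x y z a b c :
  Rabs x <= a -> Rabs y <= b -> Rabs z <= c -> Rabs (x + y * z) <= a + b * c.
Proof.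
  intros Hx Hy Hz; eapply Rle_trans; [apply Rabs_triang|]; rewrite Rabs_mult.
  apply Rplus_le_compat; [exact Hx|]; apply Rmult_le_compat; auto using Rabs_pos.
Qed.

Lemma even_odd_prod_bound a n r : 0 <= r <= 1 -> sample_in (fun y => Rabs y <= r) n a ->
  Rabs (even_prod a n - 1) <= (2 ^ n - 1) * r ^ 2 /\ Rabs (odd_prod a n) <= (2 ^ n - 1) * r.
Proof.
  intros Hr; induction n as [|n IH]; intros Ha.
  - unfold even_prod, odd_prod; simpl.
    replace ((1 + 1) / 2 - 1) with 0 by field; replace ((1 - 1) / 2) with 0 by field.
    rewrite Rabs_R0; lra.
  - destruct IH as [He Ho]; [intros i Hi; apply Ha; lia|].
    assert (Han : Rabs (a (S n)) <= r) by (apply Ha; lia).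
    assert (HK : 0 <= 2 ^ n - 1) by (pose proof (pow_R1_Rle 2 n); lra).
    rewrite even_prod_S, odd_prod_S; set (K := 2 ^ n - 1) in *.
    replace (2 ^ S n - 1) with (2 * K + 1) by (unfold K; simpl; ring); clearbody K.
    split.
    + replace (even_prod a n + a (S n) * odd_prod a n - 1)
        with ((even_prod a n - 1) + a (S n) * odd_prod a n) by ring.
      eapply Rle_trans; [exact (Rabs_plus_mult_le _ _ _ _ _ _ He Han Ho)|].
      pose proof (pow2_ge_0 r); simpl in *; nra.
    + replace (odd_prod a n + a (S n) * even_prod a n)
        with ((odd_prod a n + a (S n)) + a (S n) * (even_prod a n - 1)) by ring.
      assert (Ho' : Rabs (odd_prod a n + a (S n)) <= K * r + r)
        by (eapply Rle_trans; [apply Rabs_triang|]; lra).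
      eapply Rle_trans; [exact (Rabs_plus_mult_le _ _ _ _ _ _ Ho' Han He)|].
      assert (Hr2 : r ^ 2 <= 1) by (simpl; nra).
      assert (K * r * r ^ 2 <= K * r * 1)
        by (apply Rmult_le_compat_l; [apply Rmult_le_pos|]; lra).
      simpl in *; nra.
Qed.

Lemma even_odd_prod_const_expansion n u : Rabs u <= 1 ->
  Rabs (even_prod (fun _ => u) n - 1 - INR n * (INR n - 1) / 2 * u ^ 2) <= 4 ^ n * Rabs u ^ 3 /\
  Rabs (odd_prod (fun _ => u) n - INR n * u) <= 4 ^ n * Rabs u ^ 2.
Proof.
  intros Hu; pose proof (Rabs_pos u) as Hu0.
  induction n as [|n [He Ho]].
  - replace (even_prod (fun _ => u) 0 - 1 - INR 0 * (INR 0 - 1) / 2 * u ^ 2) with 0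
      by (unfold even_prod; simpl; field).
    replace (odd_prod (fun _ => u) 0 - INR 0 * u) with 0 by (unfold odd_prod; simpl; field).
    rewrite Rabs_R0; split; apply Rmult_le_pos; try apply pow_le; lra.
  - destruct (even_odd_prod_bound (fun _ => u) n (Rabs u)) as [He1 _];
      [lra | intros i _; lra |].
    assert (H24 : 2 ^ n <= 4 ^ n) by (apply pow_incr; lra).
    assert (H2 : 0 < 2 ^ n) by (apply pow_lt; lra).
    assert (Hu' : Rabs u <= Rabs u) by lra.
    rewrite even_prod_S, odd_prod_S, S_INR; simpl pow.
    set (K := 4 ^ n) in *; set (m := INR n) in *; clearbody K m.
    split.
    + replace (even_prod (fun _ => u) n + u * odd_prod (fun _ => u) n - 1
                 - (m + 1) * (m + 1 - 1) / 2 * (u * (u * 1)))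
        with ((even_prod (fun _ => u) n - 1 - m * (m - 1) / 2 * u ^ 2)
              + u * (odd_prod (fun _ => u) n - m * u)) by (simpl; field).
      eapply Rle_trans; [exact (Rabs_plus_mult_le _ _ _ _ _ _ He Hu' Ho)|].
      assert (0 <= K * Rabs u ^ 3) by (apply Rmult_le_pos; [|apply pow_le]; lra).
      simpl in *; lra.
    + replace (odd_prod (fun _ => u) n + u * even_prod (fun _ => u) n - (m + 1) * u)
        with ((odd_prod (fun _ => u) n - m * u) + u * (even_prod (fun _ => u) n - 1))
        by ring.
      eapply Rle_trans; [exact (Rabs_plus_mult_le _ _ _ _ _ _ Ho Hu' He1)|].
      assert (0 <= Rabs u ^ 2 * (1 - Rabs u)) by (apply Rmult_le_pos; [apply pow2_ge_0|lra]).
      simpl in *; nra.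
Qed.

(** * Second-order expansion of [Lambda] at 1 *)

Definition lambda_quad (t : R) : R := (t - 1) + (t - 1) ^ 2 / 2.

Lemma ln_le_sub_1 y : 0 < y -> ln y <= y - 1.
Proof.
  intros Hy; destruct (Req_dec (ln y) 0) as [E|E].
  - rewrite E; rewrite <- (exp_ln y Hy), E, exp_0; lra.
  - pose proof (exp_ineq1 _ E) as H; rewrite exp_ln in H by exact Hy; lra.
Qed.

(* The section only scopes the Coquelicot import, whose [Forall] shadows [List.Forall]. *)
Section LambdaTaylor.
Import Coquelicot.Coquelicot.

Lemma sub_ln_1_plus_bound s : -1/2 <= s <= 1/2 -> 0 <= s - ln (1 + s) <= 2 * s ^ 2.
Proof.
  intros Hs.
  pose proof (ln_le_sub_1 (1 + s) ltac:(lra)) as Hup.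
  pose proof (ln_le_sub_1 (/ (1 + s)) ltac:(apply Rinv_0_lt_compat; lra)) as Hlow.
  rewrite ln_Rinv in Hlow by lra.
  replace (/ (1 + s) - 1) with (- (s - s ^ 2 / (1 + s))) in Hlow by (field; lra).
  assert (s ^ 2 / (1 + s) <= 2 * s ^ 2).
  { apply Rle_div_l; [lra|]; pose proof (pow2_ge_0 s); nra. }
  lra.
Qed.

Lemma Lambda_taylor2 t : Rabs t <= 1/2 ->
  Rabs (Lambda (1 + t) - lambda_quad (1 + t)) <= 2 * Rabs t ^ 3.
Proof.
  intros Ht; apply Rabs_le_between in Ht.
  set (g s := Lambda (1 + s) - lambda_quad (1 + s)).
  assert (Hg' : forall s, -1/2 <= s <= 1/2 -> is_derive g s (ln (1 + s) - s)).
  { intros s Hs; unfold g, Lambda, lambda_quad; auto_derive; [lra|field; lra]. }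
  assert (Hbetween : forall s, Rmin 0 t <= s <= Rmax 0 t -> -1/2 <= s <= 1/2).
  { intros s; unfold Rmin, Rmax; destruct (Rle_dec 0 t); lra. }
  destruct (MVT_gen g 0 t (fun s => ln (1 + s) - s)) as [c [Hc Hgc]].
  - intros s Hs; apply Hg', Hbetween; lra.
  - intros s Hs; apply derivable_continuous_pt; exists (ln (1 + s) - s).
    apply is_derive_Reals, Hg', Hbetween, Hs.
  - assert (Hct : Rabs c <= Rabs t).
    { unfold Rmin, Rmax in Hc; apply Rabs_le_between; destruct (Rle_dec 0 t).
      - rewrite Rabs_pos_eq by lra; lra.
      - rewrite Rabs_left1 by lra; lra. }
    assert (Hg0 : g 0 = 0).
    { unfold g, Lambda, lambda_quad; cbv beta; rewrite Rplus_0_r, ln_1; lra. }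
    change (Lambda (1 + t) - lambda_quad (1 + t)) with (g t).
    rewrite <- (Rminus_0_r (g t)), <- Hg0 at 1.
    rewrite Hgc, Rminus_0_r, Rabs_mult.
    destruct (sub_ln_1_plus_bound c (Hbetween c Hc)) as [Hln0 Hln].
    rewrite Rabs_left1 by lra.
    assert (c ^ 2 <= Rabs t ^ 2)
      by (rewrite <- (pow2_abs c); apply pow_incr; split; [apply Rabs_pos | exact Hct]).
    replace (2 * Rabs t ^ 3) with (2 * Rabs t ^ 2 * Rabs t) by ring.
    apply Rmult_le_compat_r; [apply Rabs_pos | lra].
Qed.

End LambdaTaylor.

(** * The Ising integrand *)

(* [ising_tanh beta] is tanh (beta / 2). *)
Definition ising_tanh (beta : R) : R := (1 - exp (- beta)) / (1 + exp (- beta)).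

Definition sym_prod_dev (c : R) (n : nat) (mu : nat -> R) : R :=
  even_prod (fun i => c * mu i) n - 1.

Definition edge_corr (c : R) (mu : nat -> R) : R := c * (mu 1%nat * mu 2%nat).

Definition entropy_form (f : R -> R) (d L T w : R) : R :=
  (1 + T) * (d * L + ln 2) + f (1 + T) - d / 2 * ((1 - w) * L + f (1 - w)).

Definition ising_integrand (beta : R) (d : nat) (mu : nat -> R) : R :=
  Lambda (prodR (fun i => 1 - (1 - exp (- beta)) * ((1 + mu i) / 2)) d
        + prodR (fun i => 1 - (1 - exp (- beta)) * ((1 - mu i) / 2)) d)
    / (powerRZ 2 (1 - Z.of_nat d) * (1 + exp (- beta)) ^ d)
  - INR d * Lambda (1 - (1 - exp (- beta)) * ((1 + mu 1%nat * mu 2%nat) / 2))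
    / (1 + exp (- beta)).

Lemma B_Ising_iidE pi beta d : B_Ising pi beta d = iidE pi d (ising_integrand beta d).
Proof. reflexivity. Qed.

Lemma powerRZ_2_1_sub_mul_pow d : powerRZ 2 (1 - Z.of_nat d) * 2 ^ d = 2.
Proof.
  rewrite pow_powerRZ, <- powerRZ_add by lra.
  replace (1 - Z.of_nat d + Z.of_nat d)%Z with 1%Z by ring; simpl; ring.
Qed.

Lemma ising_integrand_entropy_form beta d mu :
  -1 < sym_prod_dev (ising_tanh beta) d mu -> edge_corr (ising_tanh beta) mu < 1 ->
  ising_integrand beta d mu =
  entropy_form Lambda (INR d) (ln ((1 + exp (- beta)) / 2))
    (sym_prod_dev (ising_tanh beta) d mu) (edge_corr (ising_tanh beta) mu).
Proof.
  unfold ising_integrand, ising_tanh.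
  set (q := exp (- beta)); assert (Hq : 0 < q) by apply exp_pos.
  set (c := (1 - q) / (1 + q)); set (T := sym_prod_dev c d mu); set (w := edge_corr c mu).
  intros HT Hw.
  set (h := (1 + q) / 2); assert (Hh : 0 < h) by (unfold h; lra).
  assert (Hsites : prodR (fun i => 1 - (1 - q) * ((1 + mu i) / 2)) d
                 + prodR (fun i => 1 - (1 - q) * ((1 - mu i) / 2)) d = 2 * h ^ d * (1 + T)).
  { rewrite (prodR_ext _ (fun i => h * (1 - c * mu i))) by (intros; unfold h, c; field; lra).
    rewrite (prodR_ext (fun i => 1 - (1 - q) * ((1 - mu i) / 2)) (fun i => h * (1 + c * mu i)))
      by (intros; unfold h, c; field; lra).
    unfold T, sym_prod_dev, even_prod; rewrite !prodR_scal; field. }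
  assert (Hedge : 1 - (1 - q) * ((1 + mu 1%nat * mu 2%nat) / 2) = h * (1 - w))
    by (unfold w, edge_corr, h, c; field; lra).
  assert (Hnorm : powerRZ 2 (1 - Z.of_nat d) * (1 + q) ^ d = 2 * h ^ d).
  { replace (1 + q) with (2 * h) by (unfold h; field).
    rewrite Rpow_mult_distr, <- Rmult_assoc, powerRZ_2_1_sub_mul_pow; reflexivity. }
  assert (Hhd : 0 < h ^ d) by (apply pow_lt; exact Hh).
  rewrite Hsites, Hedge, Hnorm; fold h; unfold entropy_form, Lambda.
  rewrite !ln_mult, ln_pow by (try apply Rmult_lt_0_compat; lra).
  replace (1 + q) with (2 * h) by (unfold h; field); field; lra.
Qed.

Lemma Rabs_ising_tanh_le_1 beta : Rabs (ising_tanh beta) <= 1.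
Proof.
  unfold ising_tanh; pose proof (exp_pos (- beta)) as Hq.
  apply Rabs_le; split; apply Rmult_le_reg_r with (1 + exp (- beta)); try lra;
    unfold Rdiv; rewrite Rmult_assoc, Rinv_l by lra; lra.
Qed.

Lemma Rabs_sym_prod_dev_le c n mu r : Rabs c <= 1 -> 0 <= r <= 1 ->
  sample_in (fun y => Rabs y <= r) n mu -> Rabs (sym_prod_dev c n mu) <= (2 ^ n - 1) * r ^ 2.
Proof.
  intros Hc Hr Hmu; apply even_odd_prod_bound; [exact Hr|]; intros i Hi.
  rewrite Rabs_mult; pose proof (Hmu i Hi); pose proof (Rabs_pos (mu i)).
  pose proof (Rabs_pos c); nra.
Qed.

Lemma Rabs_edge_corr_le c n mu r : (2 <= n)%nat -> Rabs c <= 1 ->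
  sample_in (fun y => Rabs y <= r) n mu -> Rabs (edge_corr c mu) <= r ^ 2.
Proof.
  intros Hn Hc Hmu; unfold edge_corr; rewrite !Rabs_mult.
  assert (H1 : Rabs (mu 1%nat) <= r) by (apply Hmu; lia).
  assert (H2 : Rabs (mu 2%nat) <= r) by (apply Hmu; lia).
  pose proof (Rabs_pos c); pose proof (Rabs_pos (mu 1%nat)); pose proof (Rabs_pos (mu 2%nat)).
  assert (Rabs (mu 1%nat) * Rabs (mu 2%nat) <= r ^ 2) by (simpl; nra).
  assert (0 <= Rabs (mu 1%nat) * Rabs (mu 2%nat)) by nra.
  nra.
Qed.

Lemma entropy_form_quad_close d L T w : 0 <= d -> Rabs T <= 1/2 -> Rabs w <= 1/2 ->
  Rabs (entropy_form Lambda d L T w - entropy_form lambda_quad d L T w)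
  <= 2 * Rabs T ^ 3 + d * Rabs w ^ 3.
Proof.
  intros Hd HT Hw; unfold entropy_form.
  replace (1 - w) with (1 + - w) by ring.
  match goal with |- Rabs ?e <= _ =>
    replace e with ((Lambda (1 + T) - lambda_quad (1 + T))
                    + (- (d / 2)) * (Lambda (1 + - w) - lambda_quad (1 + - w))) by ring end.
  assert (Hd2 : Rabs (- (d / 2)) <= d / 2) by (rewrite Rabs_Ropp, Rabs_pos_eq; lra).
  assert (Hw' : Rabs (- w) <= 1/2) by (rewrite Rabs_Ropp; exact Hw).
  pose proof (Lambda_taylor2 (- w) Hw') as Hlw; rewrite Rabs_Ropp in Hlw.
  eapply Rle_trans; [exact (Rabs_plus_mult_le _ _ _ _ _ _ (Lambda_taylor2 T HT) Hd2 Hlw)|].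
  lra.
Qed.

(** * Centred distributions *)

Section CenteredMoments.

Variables (pi : fdist) (s : R).
Hypotheses (Hmass : mass pi = 1) (Hmean : fexpect pi (fun y => y) = 0)
  (Hvar : fexpect pi (fun y => y ^ 2) = s).

Lemma fexpect_centered_quadratic a b e : fexpect pi (fun y => a + b * y + e * y ^ 2) = a + e * s.
Proof.
  rewrite fexpect_plus, fexpect_plus, fexpect_const, fexpect_scal, fexpect_scal.
  rewrite Hmass, Hmean, Hvar; ring.
Qed.

Lemma iidE_prodR_centered_quadratic n a b e :
  iidE pi n (fun mu => prodR (fun i => a + b * mu i + e * mu i ^ 2) n) = (a + e * s) ^ n.
Proof.
  rewrite <- (fexpect_centered_quadratic a b e).
  exact (iidE_prodR_iid pi n (fun y => a + b * y + e * y ^ 2)).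
Qed.

Lemma iidE_sym_prod_dev c n : iidE pi n (sym_prod_dev c n) = 0.
Proof.
  rewrite (iidE_ext pi n _ (fun mu => / 2 * prodR (fun i => 1 + c * mu i + 0 * mu i ^ 2) n
     + / 2 * prodR (fun i => 1 + (- c) * mu i + 0 * mu i ^ 2) n + - 1)).
  - rewrite !iidE_plus, !iidE_scal, !iidE_prodR_centered_quadratic, iidE_const by exact Hmass.
    rewrite Rmult_0_l, Rplus_0_r, pow1; field.
  - intros mu; unfold sym_prod_dev, even_prod.
    rewrite (prodR_ext (fun i => 1 + c * mu i + 0 * mu i ^ 2) (fun i => 1 + c * mu i)),
      (prodR_ext (fun i => 1 + - c * mu i + 0 * mu i ^ 2) (fun i => 1 - c * mu i))
      by (intros; ring).
    field.
Qed.

Lemma iidE_sym_prod_dev_sq c n :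
  iidE pi n (fun mu => sym_prod_dev c n mu ^ 2) = even_prod (fun _ => c ^ 2 * s) n - 1.
Proof.
  set (P b e mu := prodR (fun i => 1 + b * mu i + e * mu i ^ 2) n).
  rewrite (iidE_ext pi n _ (fun mu => / 4 * P (2 * c) (c ^ 2) mu + / 4 * P (- 2 * c) (c ^ 2) mu
     + / 2 * P 0 (- c ^ 2) mu + - 1 * P c 0 mu + - 1 * P (- c) 0 mu + 1)).
  - unfold P; rewrite !iidE_plus, !iidE_scal, !iidE_prodR_centered_quadratic, iidE_const
      by exact Hmass.
    unfold even_prod; rewrite !prodR_const, !Rmult_0_l, !Rplus_0_r, pow1.
    replace (1 + - c ^ 2 * s) with (1 - c ^ 2 * s) by ring; field.
  - intros mu; unfold sym_prod_dev, even_prod.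
    set (Pp := prodR (fun i => 1 + c * mu i) n); set (Pm := prodR (fun i => 1 - c * mu i) n).
    assert (E1 : P c 0 mu = Pp) by (apply prodR_ext; intros; ring).
    assert (E2 : P (- c) 0 mu = Pm) by (apply prodR_ext; intros; ring).
    assert (E3 : P (2 * c) (c ^ 2) mu = Pp * Pp)
      by (unfold Pp; rewrite <- prodR_mult; apply prodR_ext; intros; ring).
    assert (E4 : P (- 2 * c) (c ^ 2) mu = Pm * Pm)
      by (unfold Pm; rewrite <- prodR_mult; apply prodR_ext; intros; ring).
    assert (E5 : P 0 (- c ^ 2) mu = Pp * Pm)
      by (unfold Pp, Pm; rewrite <- prodR_mult; apply prodR_ext; intros; ring).
    rewrite E1, E2, E3, E4, E5; field.
Qed.

Lemma iidE_quad_model c n d L : (2 <= n)%nat ->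
  iidE pi n (fun mu => entropy_form lambda_quad d L (sym_prod_dev c n mu) (edge_corr c mu))
  = ln 2 + d * L / 2 + (even_prod (fun _ => c ^ 2 * s) n - 1) / 2 - d * c ^ 2 * s ^ 2 / 4.
Proof.
  intros Hn.
  assert (E1 : iidE pi n (fun mu => mu 1%nat * mu 2%nat) = fexpect pi (fun y => y) ^ 2)
    by exact (iidE_first_two pi n (fun y => y) Hmass Hn).
  assert (E2 : iidE pi n (fun mu => mu 1%nat ^ 2 * mu 2%nat ^ 2)
               = fexpect pi (fun y => y ^ 2) ^ 2)
    by exact (iidE_first_two pi n (fun y => y ^ 2) Hmass Hn).
  rewrite (iidE_ext pi n _ (fun mu =>
     (ln 2 + d * L / 2) + (d * L + ln 2 + 1) * sym_prod_dev c n mu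
     + / 2 * sym_prod_dev c n mu ^ 2 + d * (L + 1) / 2 * c * (mu 1%nat * mu 2%nat)
     + - (d * c ^ 2 / 4) * (mu 1%nat ^ 2 * mu 2%nat ^ 2))).
  - rewrite !iidE_plus, !iidE_scal, !iidE_const, iidE_sym_prod_dev, iidE_sym_prod_dev_sq, E1, E2
      by exact Hmass.
    rewrite Hmean, Hvar; field.
  - intros mu; unfold entropy_form, lambda_quad, edge_corr; field.
Qed.

End CenteredMoments.

Definition ising_expansion (beta : R) (d : nat) (s : R) : R :=
  ln 2 + INR d / 2 * ln ((1 + exp (- beta)) / 2)
  + INR d * (INR d - 1) / 4 * (ising_tanh beta ^ 2 * s) ^ 2
  - INR d * ising_tanh beta ^ 2 * s ^ 2 / 4.

Lemma second_moment_bounds pi r : mass pi = 1 -> supported_in (fun y => Rabs y <= r) pi ->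
  0 <= fexpect pi (fun y => y ^ 2) <= r ^ 2.
Proof.
  intros H1 Hpi; split.
  - replace 0 with (fexpect pi (fun _ => 0)) by (rewrite fexpect_const; ring).
    apply (fexpect_le _ _ _ _ Hpi); intros y _; apply pow2_ge_0.
  - replace (r ^ 2) with (fexpect pi (fun _ => r ^ 2)) by (rewrite fexpect_const, H1; ring).
    apply (fexpect_le _ _ _ _ Hpi); intros y Hy.
    rewrite <- pow2_abs; apply pow_incr; split; [apply Rabs_pos | exact Hy].
Qed.

Lemma ising_integrand_quad_close beta d mu r :
  (2 <= d)%nat -> 0 <= r -> 2 ^ d * r ^ 2 <= 1/2 -> sample_in (fun y => Rabs y <= r) d mu ->
  Rabs (ising_integrand beta d mu
        - entropy_form lambda_quad (INR d) (ln ((1 + exp (- beta)) / 2))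
            (sym_prod_dev (ising_tanh beta) d mu) (edge_corr (ising_tanh beta) mu))
  <= (2 * (2 ^ d) ^ 3 + INR d) * r ^ 6.
Proof.
  intros Hd Hr Hsmall Hmu.
  pose proof (Rabs_ising_tanh_le_1 beta) as Hc.
  assert (H2d : 1 <= 2 ^ d) by (apply pow_R1_Rle; lra).
  assert (Hr2 : r ^ 2 <= 1/2) by (pose proof (pow2_ge_0 r); nra).
  assert (HT : Rabs (sym_prod_dev (ising_tanh beta) d mu) <= 2 ^ d * r ^ 2).
  { eapply Rle_trans; [apply Rabs_sym_prod_dev_le; [exact Hc | | exact Hmu]|].
    { split; [exact Hr | simpl in Hr2; nra]. }
    pose proof (pow2_ge_0 r); lra. }
  pose proof (Rabs_edge_corr_le _ d mu r Hd Hc Hmu) as Hw.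
  rewrite ising_integrand_entropy_form
    by (apply Rabs_le_inv in HT; apply Rabs_le_inv in Hw; lra).
  eapply Rle_trans; [apply entropy_form_quad_close; [apply pos_INR | lra | lra]|].
  assert (HT3 : Rabs (sym_prod_dev (ising_tanh beta) d mu) ^ 3 <= (2 ^ d) ^ 3 * r ^ 6).
  { replace ((2 ^ d) ^ 3 * r ^ 6) with ((2 ^ d * r ^ 2) ^ 3) by ring.
    apply pow_incr; split; [apply Rabs_pos | exact HT]. }
  assert (Hw3 : Rabs (edge_corr (ising_tanh beta) mu) ^ 3 <= r ^ 6).
  { replace (r ^ 6) with ((r ^ 2) ^ 3) by ring.
    apply pow_incr; split; [apply Rabs_pos | exact Hw]. }
  pose proof (pos_INR d); nra.
Qed.

Theorem B_Ising_centered_expansion beta d pi r :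
  (2 <= d)%nat -> 0 <= r -> 2 ^ d * r ^ 2 <= 1/2 ->
  mass pi = 1 -> supported_in (fun y => Rabs y <= r) pi -> fexpect pi (fun y => y) = 0 ->
  Rabs (B_Ising pi beta d - ising_expansion beta d (fexpect pi (fun y => y ^ 2)))
  <= (2 * (2 ^ d) ^ 3 + INR d + 4 ^ d / 2) * r ^ 6.
Proof.
  intros Hd Hr Hsmall H1 Hpi Hmean.
  destruct (second_moment_bounds pi r H1 Hpi) as [Hs0 Hsr].
  set (s := fexpect pi (fun y => y ^ 2)) in *.
  set (c := ising_tanh beta); set (L := ln ((1 + exp (- beta)) / 2)).
  set (u := c ^ 2 * s).
  assert (Hclose : Rabs (B_Ising pi beta d - iidE pi d (fun mu =>
                     entropy_form lambda_quad (INR d) L (sym_prod_dev c d mu) (edge_corr c mu)))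
                   <= (2 * (2 ^ d) ^ 3 + INR d) * r ^ 6).
  { rewrite B_Ising_iidE; apply (Rabs_iidE_sub_le _ (fun y => Rabs y <= r));
      [exact Hpi | exact H1 |].
    intros mu Hmu; apply ising_integrand_quad_close; assumption. }
  rewrite (iidE_quad_model pi s H1 Hmean eq_refl c d (INR d) L Hd) in Hclose.
  assert (Hu : 0 <= u <= r ^ 2).
  { pose proof (Rabs_ising_tanh_le_1 beta) as Hc; fold c in Hc.
    assert (c ^ 2 <= 1) by (rewrite <- pow2_abs; pose proof (Rabs_pos c); simpl; nra).
    unfold u; pose proof (pow2_ge_0 c); split; nra. }
  assert (H2d : 1 <= 2 ^ d) by (apply pow_R1_Rle; lra).
  destruct (even_odd_prod_const_expansion d u) as [Hexp _];
    [rewrite Rabs_pos_eq by lra; pose proof (pow2_ge_0 r); nra|].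
  match goal with |- Rabs ?e <= _ =>
    replace e with ((B_Ising pi beta d - (ln 2 + INR d * L / 2 + (even_prod (fun _ => u) d - 1) / 2
                      - INR d * c ^ 2 * s ^ 2 / 4))
                    + / 2 * (even_prod (fun _ => u) d - 1 - INR d * (INR d - 1) / 2 * u ^ 2))
      by (unfold ising_expansion; fold c L u; field) end.
  assert (Hhalf : Rabs (/ 2) <= / 2) by (rewrite Rabs_pos_eq; lra).
  eapply Rle_trans; [exact (Rabs_plus_mult_le _ _ _ _ _ _ Hclose Hhalf Hexp)|].
  assert (Hu3 : Rabs u ^ 3 <= r ^ 6).
  { rewrite Rabs_pos_eq by lra; replace (r ^ 6) with ((r ^ 2) ^ 3) by ring.
    apply pow_incr; lra. }
  assert (H4d : 0 <= 4 ^ d) by (apply pow_le; lra).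
  nra.
Qed.

Lemma pistar_mass eps : mass (pistar eps) = 1.
Proof. unfold mass, pistar; simpl; field. Qed.

Lemma pistar_supported eps : supported_in (fun y => Rabs y <= 2 * Rabs eps) (pistar eps).
Proof.
  unfold supported_in, pistar; repeat constructor; simpl; try lra;
    rewrite ?Rabs_Ropp, Rabs_mult, Rabs_pos_eq by lra; lra.
Qed.

Lemma pistar_mean eps : fexpect (pistar eps) (fun y => y) = 0.
Proof. unfold fexpect, pistar; simpl; field. Qed.

Lemma pistar_second_moment eps : fexpect (pistar eps) (fun y => y ^ 2) = 4 * eps ^ 2.
Proof. unfold fexpect, pistar; simpl; field. Qed.

Lemma ising_expansion_pistar beta d eps :
  ising_expansion beta d (4 * eps ^ 2) =
  ln 2 + INR d / 2 * ln ((1 + exp (- beta)) / 2)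
  + 4 * eps ^ 4 * INR d * exp (-2 * beta) * (exp beta - 1) ^ 2
    * (exp (2 * beta) * (INR d - 2) - 2 * INR d * exp beta + INR d - 2)
    / ((1 + exp beta) ^ 2 * (1 + exp (- beta)) ^ 2).
Proof.
  pose proof (exp_pos beta) as Hb.
  replace (exp (-2 * beta)) with (/ exp beta * / exp beta)
    by (rewrite <- !exp_Ropp, <- exp_plus; f_equal; ring).
  replace (exp (2 * beta)) with (exp beta * exp beta) by (rewrite <- exp_plus; f_equal; ring).
  unfold ising_expansion, ising_tanh; rewrite exp_Ropp.
  assert (0 < / exp beta) by (apply Rinv_0_lt_compat; lra).
  field; lra.
Qed.

Theorem lemma5p2 (d : nat) (beta : R) :
  (3 <= d)%nat -> 0 < beta ->
  exists C delta : R, 0 < delta /\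
    forall eps : R, 0 < Rabs eps < delta ->
      Rabs (B_Ising (pistar eps) beta d
            - (ln 2 + INR d / 2 * ln ((1 + exp (- beta)) / 2)
               + 4 * eps ^ 4 * INR d * exp (-2 * beta) * (exp beta - 1) ^ 2
                 * (exp (2 * beta) * (INR d - 2) - 2 * INR d * exp beta + INR d - 2)
                 / ((1 + exp beta) ^ 2 * (1 + exp (- beta)) ^ 2)))
      <= C * Rabs eps ^ 5.
Proof.
  intros Hd _.
  assert (H2d : 1 <= 2 ^ d) by (apply pow_R1_Rle; lra).
  exists (64 * (2 * (2 ^ d) ^ 3 + INR d + 4 ^ d / 2)), (/ (4 * 2 ^ d)).
  split; [apply Rinv_0_lt_compat; lra|].
  intros eps [Heps0 Heps].
  assert (Hsmall : 4 * 2 ^ d * Rabs eps < 1).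
  { apply (Rmult_lt_compat_l (4 * 2 ^ d)) in Heps; [|lra].
    rewrite Rinv_r in Heps by lra; exact Heps. }
  rewrite <- ising_expansion_pistar, <- pistar_second_moment.
  eapply Rle_trans; [apply (B_Ising_centered_expansion beta d _ (2 * Rabs eps)); try lia;
    auto using pistar_mass, pistar_supported, pistar_mean; simpl; nra|].
  assert (Heps1 : Rabs eps <= 1) by nra.
  set (C := 2 * (2 ^ d) ^ 3 + INR d + 4 ^ d / 2).
  assert (HC : 0 <= C) by (pose proof (pos_INR d); pose proof (pow_le 4 d ltac:(lra));
                           unfold C; nra).
  replace ((2 * Rabs eps) ^ 6) with (64 * Rabs eps ^ 5 * Rabs eps) by ring.
  replace (64 * C * Rabs eps ^ 5) with (C * (64 * Rabs eps ^ 5 * 1)) by ring.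
  apply Rmult_le_compat_l; [exact HC|]; apply Rmult_le_compat_l; [|exact Heps1].
  pose proof (pow_le (Rabs eps) 5 (Rabs_pos eps)); lra.
Qed.
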